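(* Let $X$ be finite, $\mathcal{X}_{lim}\subseteq\mathcal{X}^2$, and let $p$ be an observed random joint choice rule on $\mathcal{X}_{lim}$. The following are equivalent: (1) $p$ has a consumption dependent random utility representation on $\mathcal{X}_{lim}$; (2) there exists a vector $r\ge0$ with $rE=p$; (3) there exists a function $q$, indexed by all $(x,y,A,B)$ with $A,B\in\mathcal{X}$, $(x,y)\in A\times B$, satisfying: (a) $\sum_{A\subseteq A'\subseteq X}\sum_{B\subseteq B'\subseteq X}q(x,y,A',B')=p(x,y,A,B)$ for all $A\times B\in\mathcal{X}_{lim}$ and $(x,y)\in A\times B$; (b) $\sum_{y\in B}q(x,y,A,B)=\sum_{z\in X\setminus B}q(x,z,A,B\cup\{z\})$ for all $A\in\mathcal{X}$, all nonempty $B\subsetneq X$, and all $x\in A$; (c) $q(x,y,A,B)\ge0$ for all $A,B\in\mathcal{X}$, $(x,y)\in A\times B$; (d) $\sum_{x\in A}\sum_{y\in X}q(x,y,A,X)=\sum_{z\in X\setminus A}\sum_{y\in X}q(z,y,A\cup\{z\},X)$ for all $A\in\mathcal{X}$ with $A\ne X$; (e) $\sum_{x\in X}\sum_{y\in X}q(x,y,X,X)=1$.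
   Context: $X$ is finite, $\mathcal{X}$ the nonempty subsets of $X$, $\mathcal{L}(X)$ the linear orders on $X$, $M(\succ,A)$ the $\succ$-maximal element of $A$, $N(x,A)=\{\succ: x\succ y\ \forall y\in A\setminus\{x\}\}$. An observed random joint choice rule on $\mathcal{X}_{lim}$ assigns to each $A\times B\in\mathcal{X}_{lim}$ and $(x,y)\in A\times B$ a number $p(x,y,A,B)\ge0$ with $\sum_{x\in A}\sum_{y\in B}p(x,y,A,B)=1$; view $p$ as a vector indexed by such $(x,y,A,B)$. It has a consumption dependent random utility representation if there exist $\nu\in\Delta(\mathcal{L}(X))$ and a transition function $t:X\times\mathcal{L}(X)\to\Delta(\mathcal{L}(X))$ (with $t_{\succ'}(x,\succ)$ the probability of $\succ'$) such that $p(x,y,A,B)=\sum_{\succ\in N(x,A)}\sum_{\succ'\in N(y,B)}\nu(\succ)t_{\succ'}(x,\succ)$ for all $A\times B\in\mathcal{X}_{lim}$, $(x,y)\in A\times B$. The matrix $E$ has rows indexed by tuples $(\succ,(\succ_z)_{z\in X})\in\mathcal{L}(X)^{|X|+1}$ and columns indexed by $(x,y,A,B)$ with $A\times B\in\mathcal{X}_{lim}$, $(x,y)\in A\times B$; its entry is $1$ if $x=M(\succ,A)$ and $y=M(\succ_x,B)$, and $0$ otherwise. *)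

From HB Require Import structures.
From mathcomp Require Import all_boot all_order all_algebra.
From mathcomp Require Import reals.
Set Implicit Arguments. Unset Strict Implicit. Unset Printing Implicit Defensive.
Import Order.TTheory GRing.Theory Num.Theory.
Local Open Scope ring_scope.

Section Defs.
Variable X : finType.

(* A (strict) linear order on X, as a boolean relation encoded by a finite
   function on pairs: [rel x y | r (x,y)] means x ≻ y. *)
Definition is_slo (r : {ffun X * X -> bool}) : bool :=
  [&& [forall x, ~~ r (x, x)],
      [forall x, forall y, forall z, r (x, y) ==> r (y, z) ==> r (x, z)] &
      [forall x, forall y, (x != y) ==> r (x, y) || r (y, x)]].

Definition LO := {r : {ffun X * X -> bool} | is_slo r}.

Definition lo_rel (o : LO) (x y : X) : bool := (val o) (x, y).

Definition inN (o : LO) (x : X) (A : {set X}) : bool :=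
  [forall y in A, (y != x) ==> lo_rel o x y].

Definition isMax (o : LO) (A : {set X}) (x : X) : bool :=
  (x \in A) && inN o x A.

(* Rows of E: tuples (o, (o_z)_{z in X}) in L(X)^{|X|+1}. *)
Definition Row := (LO * {ffun X -> LO})%type.

Definition Eentry (R : realType) (w : Row) (x y : X) (A B : {set X}) : R :=
  if isMax w.1 A x && isMax (w.2 x) B y then 1 else 0.

Variable R : realType.
Variable Xlim : {set {set X} * {set X}}.
Variable p : X -> X -> {set X} -> {set X} -> R.

Definition observed_RJCR : Prop :=
  (forall A B, (A, B) \in Xlim -> A != set0 /\ B != set0) /\
  (forall A B x y, (A, B) \in Xlim -> x \in A -> y \in B -> 0 <= p x y A B) /\
  (forall A B, (A, B) \in Xlim -> \sum_(x in A) \sum_(y in B) p x y A B = 1).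

(* (1) consumption dependent random utility representation.
   nu o = ν(o);  t x o o' = t_{o'}(x, o). *)
Definition CDRU_rep : Prop :=
  exists (nu : LO -> R) (t : X -> LO -> LO -> R),
    [/\ (forall o, 0 <= nu o), \sum_o nu o = 1,
        (forall x o o', 0 <= t x o o'),
        (forall x o, \sum_o' t x o o' = 1) &
        (forall A B x y, (A, B) \in Xlim -> x \in A -> y \in B ->
           p x y A B = \sum_(o | inN o x A) \sum_(o' | inN o' y B) nu o * t x o o')].

Definition rE_rep : Prop :=
  exists r : Row -> R,
    (forall w, 0 <= r w) /\
    (forall A B x y, (A, B) \in Xlim -> x \in A -> y \in B ->
       \sum_w r w * Eentry R w x y A B = p x y A B).

Definition q_rep : Prop :=
  exists q : X -> X -> {set X} -> {set X} -> R,
    [/\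
        (forall A B x y, (A, B) \in Xlim -> x \in A -> y \in B ->
           \sum_(A' : {set X} | A \subset A') \sum_(B' : {set X} | B \subset B') q x y A' B'
             = p x y A B),
        (forall A B x, A != set0 -> B != set0 -> B != setT -> x \in A ->
           \sum_(y in B) q x y A B = \sum_(z in ~: B) q x z A (z |: B)),
        (forall A B x y, A != set0 -> B != set0 -> x \in A -> y \in B ->
           0 <= q x y A B),
        (forall A, A != set0 -> A != setT ->
           \sum_(x in A) \sum_(y : X) q x y A setT
             = \sum_(z in ~: A) \sum_(y : X) q z y (z |: A) setT) &
        \sum_(x : X) \sum_(y : X) q x y setT setT = 1].

End Defs.

From mathcomp Require Import all_boot all_order all_algebra.
From mathcomp Require Import reals.
Set Implicit Arguments. Unset Strict Implicit. Unset Printing Implicit Defensive.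
Import Order.TTheory GRing.Theory Num.Theory.

(* (1) <-> (2): a consumption dependent random utility is a probability r on tuples
   (≻, (≻_z)_z) of the product form r(≻, (≻_z)_z) = ν(≻) ∏_z t_{≻_z}(z, ≻); conversely ν
   and t are the marginal and the conditionals of any r, and both representations
   reduce to the same equation for p.
   (2) -> (3): q(x, y, A, B) is the r-probability that A and B are exactly the lower
   contour sets of x under ≻ and of y under ≻_x.  Then (a) is a sum over supersets, and
   (b)-(e) hold because the lower contour sets of a linear order form a maximal chain.
   (3) -> (2): let φ(y, B) >= 0 (y ∈ B) satisfy the conservation law
   Σ_{y∈B} φ(y, B) = Σ_{z∉B} φ(z, B ∪ {z}) and put F(B) = Σ_{y∈B} φ(y, B).  Build a random
   order from the top: at the current set S choose its maximum y with probability
   φ(y, S)/F(S) and pass to S \ {y}.  By conservation the chain reaches S with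
   probability F(S)/F(X), so F(X) P(y has lower contour set B) = φ(y, B).  Applied to
   φ = Σ_y q(·, y, ·, X) this yields ν, and applied to q(x, ·, A, ·) it yields t(x, ·). *)

Section LinearOrders.
Variables (X : finType) (o : LO X).

Lemma lo_irr x : ~~ lo_rel o x x.
Proof. by have /and3P[/forallP irr _ _] := valP o; apply: irr. Qed.

Lemma lo_trans x y z : lo_rel o x y -> lo_rel o y z -> lo_rel o x z.
Proof.
have /and3P[_ /forallP tr _] := valP o; rewrite /lo_rel => rxy ryz.
by move: (tr x) => /forallP/(_ y)/forallP/(_ z); rewrite rxy ryz.
Qed.

Lemma lo_total x y : x != y -> lo_rel o x y || lo_rel o y x.
Proof.
by have /and3P[_ _ /forallP tot] := valP o; move: (tot x) => /forallP/(_ y)/implyP; apply.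
Qed.

Definition downset (x : X) : {set X} := [set w | (w == x) || lo_rel o x w].

Lemma downset_refl x : x \in downset x.
Proof. by rewrite inE eqxx. Qed.

Lemma downset_trans x y : x \in downset y -> downset x \subset downset y.
Proof.
rewrite inE => /orP[/eqP -> //|ryx]; apply/subsetP => w; rewrite !inE.
by case/orP=> [/eqP ->|rxw]; rewrite ?ryx ?(lo_trans ryx rxw) orbT.
Qed.

Lemma downset_antisym x y : x \in downset y -> y \in downset x -> x = y.
Proof.
rewrite !inE => /orP[/eqP //|ryx] /orP[/eqP //|rxy].
by have := lo_irr x; rewrite (lo_trans rxy ryx).
Qed.

Lemma downset_total x y : (x \in downset y) || (y \in downset x).
Proof. by rewrite !inE; case: (eqVneq x y) => //= nxy; rewrite orbC lo_total. Qed.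

Lemma downset_inj : injective downset.
Proof.
move=> x y dxy; apply: downset_antisym; first by rewrite -dxy downset_refl.
by rewrite dxy downset_refl.
Qed.

Lemma card_downset_lt x y : x \in downset y -> x != y -> (#|downset x| < #|downset y|)%N.
Proof.
move=> xy nxy; rewrite proper_card // properE downset_trans //=.
apply/subsetPn; exists y; rewrite ?downset_refl //.
by apply: contra nxy => yx; rewrite (downset_antisym xy yx).
Qed.

Lemma inNE x A : inN o x A = (A \subset downset x).
Proof.
apply/forall_inP/subsetP => [sub y yA|sub y yA]; rewrite ?inE.
  by case: eqVneq (implyP (sub y yA)) => //= _ ->.
by apply/implyP => nyx; move: (sub y yA); rewrite inE (negbTE nyx).
Qed.

Lemma isMaxE A x : isMax o A x = (x \in A) && (A \subset downset x).
Proof. by rewrite /isMax inNE. Qed.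

Lemma exists_max A : A != set0 -> exists2 m, m \in A & A \subset downset m.
Proof.
case/set0Pn=> a0 a0A; case: (arg_maxnP (fun a => #|downset a|) a0A) => m mA maxm.
exists m => //; apply/subsetP => a aA; case/orP: (downset_total a m) => // ma.
case: (eqVneq m a) => [->|nma]; first exact: downset_refl.
by have /= := maxm a aA; rewrite leqNgt card_downset_lt.
Qed.

Lemma exists_min A : A != set0 -> exists2 m, m \in A & {in A, forall a, m \in downset a}.
Proof.
case/set0Pn=> a0 a0A; case: (arg_minnP (fun a => #|downset a|) a0A) => m mA minm.
exists m => // a aA; case/orP: (downset_total m a) => // am.
case: (eqVneq a m) => [->|nam]; first exact: downset_refl.
by have /= := minm a aA; rewrite leqNgt card_downset_lt.
Qed.

Lemma downset_succ B : B != set0 -> B != setT ->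
  [exists y, downset y == B] = [exists z, (z \notin B) && (downset z == z |: B)].
Proof.
move=> B0 BT; apply/existsP/existsP => [[y /eqP dyB]|[z /andP[zB /eqP dzB]]].
  have CB0 : ~: B != set0 by apply: contra BT => /eqP CB; rewrite -(setCK B) CB setC0.
  case: (exists_min CB0) => z; rewrite inE => zB minz; exists z; rewrite zB /=.
  have yz : y \in downset z.
    by case/orP: (downset_total z y) => //; rewrite dyB (negbTE zB).
  rewrite eqEsubset subUset sub1set downset_refl -{2}dyB (downset_trans yz) !andbT.
  apply/subsetP => w wz; rewrite in_setU1; case: (boolP (w \in B)); rewrite ?orbT //.
  by move=> wB; rewrite (downset_antisym wz (minz w _)) ?eqxx ?inE.
case: (exists_max B0) => y yB By; exists y.
rewrite eqEsubset By andbT; apply/subsetP => w wy.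
have yz : y \in downset z by rewrite dzB in_setU1 yB orbT.
move: (subsetP (downset_trans yz) w wy); rewrite dzB in_setU1 => /orP[/eqP wz|//].
by rewrite wz in wy; move: zB; rewrite (downset_antisym wy yz) yB.
Qed.

End LinearOrders.

Section Arrangements.
Variable X : finType.

Fixpoint arrangements (n : nat) (B : {set X}) : seq (seq X) :=
  if n is n'.+1 then [seq x :: s | x <- enum B, s <- arrangements n' (B :\ x)]
  else [:: [::]].

Lemma mem_arrangements n (B : {set X}) s :
  (s \in arrangements n B) = [&& uniq s, size s == n & all [in B] s].
Proof.
elim: n B s => [|n IH] B s /=; first by case: s => [|a s]; rewrite inE //= andbF.
apply/allpairsPdep/idP => [[x [t [xB tE ->]]]|].
  move: tE; rewrite IH mem_enum in xB * => /and3P[ut st /allP Bt] /=.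
  rewrite xB ut eqSS st !andbT /=; apply/andP; split.
    by apply/negP => /Bt; rewrite !inE eqxx.
  by apply/allP => z /Bt; rewrite inE => /andP[].
case: s => [|x t] //= /and3P[/andP[xt ut] st /andP[xB Bt]].
exists x, t; split; rewrite ?mem_enum // IH ut -(eqSS _ n) st /=.
by apply/allP => z zt; rewrite !inE (allP Bt z zt) andbT; apply: contraNneq xt => <-.
Qed.

Lemma arrangements_card (B : {set X}) s :
  (s \in arrangements #|B| B) = uniq s && ([set:: s] == B).
Proof.
rewrite mem_arrangements; case: (boolP (uniq s)) => //= us.
have cs : #|[set:: s]| = size s by rewrite cardsE; apply/card_uniqP.
apply/andP/eqP => [[/eqP sB /allP Bs]|<-]; last first.
  by rewrite cs eqxx; split=> //; apply/allP => w ws; rewrite inE.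
by apply/eqP; rewrite eqEcard cs sB leqnn andbT; apply/subsetP => w; rewrite inE => /Bs.
Qed.

Lemma uniq_arrangements n (B : {set X}) : uniq (arrangements n B).
Proof.
elim: n B => [|n IH] B //=; apply: allpairs_uniq_dep => [|x _|]; rewrite ?enum_uniq //.
by move=> [a u] [b v] _ _ /= [-> ->].
Qed.

Lemma big_arrangementsS (R : Type) (idx : R) (op : Monoid.com_law idx) (h : seq X -> R) n B :
  \big[op/idx]_(s <- arrangements n.+1 B) h s =
  \big[op/idx]_(x in B) \big[op/idx]_(s <- arrangements n (B :\ x)) h (x :: s).
Proof. by rewrite /= big_allpairs_dep big_enum. Qed.

Lemma big_arrangements_rev (R : Type) (idx : R) (op : Monoid.com_law idx) (h : seq X -> R) n B :
  \big[op/idx]_(s <- arrangements n B) h s = \big[op/idx]_(s <- arrangements n B) h (rev s).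
Proof.
rewrite -[RHS](big_map (@rev X) xpredT); apply: perm_big; apply: uniq_perm.
- exact: uniq_arrangements.
- by rewrite map_inj_uniq ?uniq_arrangements //; apply: (can_inj (@revK X)).
- move=> s; rewrite -{2}(revK s) mem_map; last exact: (can_inj (@revK X)).
  by rewrite !mem_arrangements rev_uniq size_rev all_rev.
Qed.

Lemma big_arrangements_rcons (R : Type) (idx : R) (op : Monoid.com_law idx) (h : seq X -> R) n B :
  \big[op/idx]_(s <- arrangements n.+1 B) h s =
  \big[op/idx]_(x in B) \big[op/idx]_(s <- arrangements n (B :\ x)) h (rcons s x).
Proof.
rewrite big_arrangements_rev big_arrangementsS; apply: eq_bigr => x _.
by rewrite big_arrangements_rev; apply: eq_bigr => s _; rewrite rev_cons revK.
Qed.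

End Arrangements.

Section OrdersOfSequences.
Variable X : finType.
Implicit Types (s t : seq X) (o : LO X).

(* [s] lists elements from the bottom up; the [enum_rank] tie-break makes [lo_of_seq s]
   a linear order even when [s] misses some elements. *)
Definition seq_key s x : nat := index x s * #|X| + enum_rank x.

Lemma seq_key_inj s : injective (seq_key s).
Proof.
move=> x y; rewrite /seq_key => exy; apply/enum_rank_inj/val_inj.
have: (index x s * #|X| + enum_rank x = enum_rank y %[mod #|X|])%N by rewrite exy modnMDl.
by rewrite modnMDl !modn_small.
Qed.

Lemma seq_key_lt s x y : (index x s < index y s)%N -> (seq_key s x < seq_key s y)%N.
Proof.
have := ltn_ord (enum_rank x); rewrite /seq_key => rx lt_xy.
apply: leq_trans (leq_addr _ _); apply: leq_trans (leq_mul lt_xy (leqnn #|X|)).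
by rewrite mulSn addnC ltn_add2r.
Qed.

Definition seq_rel s : {ffun X * X -> bool} :=
  [ffun xy => seq_key s xy.2 < seq_key s xy.1]%N.

Lemma seq_rel_slo s : is_slo (seq_rel s).
Proof.
apply/and3P; split; apply/forallP => x; rewrite ?ffunE ?ltnn //.
  apply/forallP => y; apply/forallP => z; rewrite !ffunE /=.
  by apply/implyP => lt_yx; apply/implyP => lt_zy; apply: ltn_trans lt_zy lt_yx.
apply/forallP => y; apply/implyP => nxy; rewrite !ffunE /=.
by case: ltngtP => // /seq_key_inj exy; rewrite exy eqxx in nxy.
Qed.

Definition lo_of_seq s : LO X := exist _ (seq_rel s) (seq_rel_slo s).

Lemma lo_of_seqE s x y : x \in s -> y \in s ->
  lo_rel (lo_of_seq s) x y = (index y s < index x s)%N.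
Proof.
move=> xs ys; rewrite /lo_rel /= ffunE /=.
case: (ltngtP (index y s) (index x s)) => [/seq_key_lt -> //|/seq_key_lt /ltnW|eq_i].
  by rewrite leqNgt => /negbTE.
by rewrite (index_inj y ys xs eq_i) ltnn.
Qed.

Definition orderings : seq (seq X) := arrangements #|X| setT.

Lemma mem_orderings s : (s \in orderings) = uniq s && [forall x, x \in s].
Proof.
rewrite /orderings -cardsT arrangements_card; congr (_ && _).
apply/idP/idP => [/eqP sT|sT]; last by apply/eqP/setP => x; rewrite !inE (forallP sT).
by apply/forallP => x; rewrite -[x \in s]in_set sT inE.
Qed.

Definition prefix_set s y : {set X} := [set:: take (index y s).+1 s].

Lemma downset_lo_of_seq s y : s \in orderings -> downset (lo_of_seq s) y = prefix_set s y.
Proof.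
rewrite mem_orderings => /andP[_ /forallP sT]; apply/setP => w.
rewrite !inE lo_of_seqE ?in_take // ltnS [RHS]leq_eqVlt; congr (_ || _).
by apply/eqP/eqP => [-> //|]; apply: index_inj.
Qed.

Lemma card_downset_lo_of_seq s y : s \in orderings ->
  #|downset (lo_of_seq s) y| = (index y s).+1.
Proof.
move=> hs; rewrite downset_lo_of_seq // cardsE.
move: hs; rewrite mem_orderings => /andP[us /forallP sT].
by rewrite (card_uniqP (take_uniq _ us)) size_takel // index_mem.
Qed.

Lemma lo_of_seq_inj : {in orderings &, injective lo_of_seq}.
Proof.
move=> s t hs ht /(congr1 (fun o => @downset X o)) est.
have {est} index_st x : index x s = index x t.
  by apply: succn_inj; rewrite -!card_downset_lo_of_seq // est.
have size_st : size s = size t.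
  by move: hs ht; rewrite /orderings !mem_arrangements => /and3P[_ /eqP -> _] /and3P[_ /eqP -> _].
move: hs ht; rewrite !mem_orderings => /andP[us /forallP sT] /andP[ut /forallP tT].
case: s => [|x0 s'] in us sT index_st size_st *; first by move/esym/size0nil: size_st.
apply: (eq_from_nth (x0 := x0)) => // i lt_i.
by rewrite -{2}(index_uniq x0 lt_i us) index_st nth_index.
Qed.

Lemma lo_of_seq_surj o : exists2 s, s \in orderings & lo_of_seq s = o.
Proof.
pose le_o := fun a b => a \in downset o b.
have le_total : total le_o by move=> a b; apply: downset_total.
have le_trans : transitive le_o by move=> b a c ab bc; apply: subsetP (downset_trans bc) a ab.
set s := sort le_o (enum X).
have sT x : x \in s by rewrite mem_sort mem_enum.
exists s; first by rewrite mem_orderings sort_uniq enum_uniq; apply/forallP.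
apply: val_inj; apply/ffunP => -[x y]; rewrite -[LHS]/(lo_rel _ x y) -[RHS]/(lo_rel o x y).
rewrite lo_of_seqE //; case: (ltngtP (index y s) (index x s)) => lt_i.
- have := sorted_ltn_index le_trans (sort_sorted le_total _) _ _ (sT y) (sT x) lt_i.
  by rewrite /le_o inE => /orP[/eqP eyx|//]; rewrite eyx ltnn in lt_i.
- have := sorted_ltn_index le_trans (sort_sorted le_total _) _ _ (sT x) (sT y) lt_i.
  rewrite /le_o inE => /orP[/eqP exy|ryx]; first by rewrite exy ltnn in lt_i.
  by apply/esym/negP => rxy; have := lo_irr o x; rewrite (lo_trans rxy ryx).
- by rewrite (index_inj y (sT y) (sT x) lt_i) (negbTE (lo_irr _ _)).
Qed.

Lemma big_LO (R : Type) (idx : R) (op : Monoid.com_law idx) (g : LO X -> R) :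
  \big[op/idx]_(o : LO X) g o = \big[op/idx]_(s <- orderings) g (lo_of_seq s).
Proof.
rewrite -(big_map lo_of_seq xpredT g); apply: perm_big; apply: uniq_perm.
- exact: index_enum_uniq.
- by rewrite map_inj_in_uniq ?uniq_arrangements //; apply: lo_of_seq_inj.
- move=> o; rewrite mem_index_enum; case: (lo_of_seq_surj o) => s hs <-.
  by apply/esym/mapP; exists s.
Qed.

End OrdersOfSequences.

Section PrefixSplit.
Variable X : finType.
Implicit Types (s u v : seq X) (B E : {set X}).

Lemma prefix_set_cat v y u : y \notin v -> prefix_set (v ++ y :: u) y = y |: [set:: v].
Proof.
move=> yv; rewrite /prefix_set index_cat (negbTE yv) /= eqxx addn0.
rewrite take_cat ltnNge leqnSn /= subSnn /=.
by apply/setP => w; rewrite !inE mem_cat inE take0 orbF orbC.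
Qed.

Lemma prefix_set_cons x s z :
  prefix_set (x :: s) z = if x == z then [set x] else x |: prefix_set s z.
Proof.
by rewrite /prefix_set /= eq_sym; case: eqVneq => _; rewrite /= ?take0 ?set_seq1 ?set_cons.
Qed.

Lemma arrangements_cat_split E B v y u : y \in B -> B \subset E -> y \notin v ->
  (v ++ y :: u \in arrangements #|E| E) && (prefix_set (v ++ y :: u) y == B) =
  (v \in arrangements #|B :\ y| (B :\ y)) && (u \in arrangements #|E :\: B| (E :\: B)).
Proof.
move=> yB BE yv; rewrite !arrangements_card prefix_set_cat // cat_uniq.
apply/idP/idP => [/andP[/andP[/and3P[uv /hasPn vu /andP[yu uu]] /eqP sE] /eqP sB]|].
  have vB : [set:: v] = B :\ y by rewrite -sB setU1K ?inE.
  apply/and3P; split; [by rewrite uv vB /= | exact: uu |].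
  apply/eqP/setP => w; rewrite -sE -sB in_setD in_setU1 !in_set mem_cat in_cons.
  case: (boolP (w \in u)) => wu; last by rewrite orbF; case: (w == y); case: (w \in v).
  rewrite (negbTE (vu w _)) ?inE ?wu ?orbT //= orbF andbT.
  by apply/esym; apply: contraNneq yu => <-.
case/and3P=> /andP[uv /eqP vB] uu /eqP uEB.
have memv w : (w \in v) = (w \in B :\ y) by rewrite -vB inE.
have memu w : (w \in u) = (w \in E :\: B) by rewrite -uEB inE.
rewrite uv /= memu !inE yB /= vB setD1K // eqxx !andbT uu (negbTE yv) andbT /=.
apply/andP; split.
  by apply/hasPn => w; rewrite memu memv !inE => /andP[/negbTE ->]; rewrite andbF.
apply/eqP/setP => w; rewrite !inE mem_cat in_cons memv memu !inE.
case: (eqVneq w y) => [->|_] /=; first by rewrite (subsetP BE).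
by case: (boolP (w \in B)) => //= /(subsetP BE) ->.
Qed.

Lemma mem_prefix_split E B y s : y \in B -> B \subset E ->
  (s \in arrangements #|E| E) && (prefix_set s y == B) =
  (s \in [seq v ++ y :: u | v <- arrangements #|B :\ y| (B :\ y),
                            u <- arrangements #|E :\: B| (E :\: B)]).
Proof.
move=> yB BE; apply/idP/allpairsP => [hs|[[v u] /= [hv hu ->]]]; last first.
  have yv : y \notin v.
    by move: hv; rewrite arrangements_card => /andP[_ /eqP vB]; rewrite -[y \in v]inE vB setD11.
  by rewrite arrangements_cat_split // hv hu.
have ys : y \in s.
  move: hs => /andP[]; rewrite arrangements_card => /andP[_ /eqP sE] _.
  by rewrite -[y \in s]inE sE (subsetP BE).
have def_s : s = take (index y s) s ++ y :: drop (index y s).+1 s.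
  by rewrite -{2}(nth_index y ys) -drop_nth ?index_mem // cat_take_drop.
have ytake : y \notin take (index y s) s by rewrite in_take // ltnn.
move: hs; rewrite def_s arrangements_cat_split // => /andP[hv hu].
by exists (take (index y s) s, drop (index y s).+1 s).
Qed.

Lemma big_prefix_split (R : Type) (idx : R) (op : Monoid.com_law idx) (h : seq X -> R) E B y :
  y \in B -> B \subset E ->
  \big[op/idx]_(s <- arrangements #|E| E | prefix_set s y == B) h s =
  \big[op/idx]_(v <- arrangements #|B :\ y| (B :\ y))
     \big[op/idx]_(u <- arrangements #|E :\: B| (E :\: B)) h (v ++ y :: u).
Proof.
move=> yB BE; rewrite -big_filter -(big_allpairs_dep (h := fun v u => v ++ y :: u)).
apply: perm_big; apply: uniq_perm.
- by rewrite filter_uniq ?uniq_arrangements.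
- apply: allpairs_uniq; rewrite ?uniq_arrangements // => -[v1 u1] [v2 u2].
  move=> /allpairsP[[v u] [hv1 _ [-> _]]] /allpairsP[[v' u'] [hv2 _ [-> _]]] /= /eqP.
  rewrite eqseq_cat => [/andP[/eqP -> /eqP[->]] //|].
  by move: hv1 hv2; rewrite !mem_arrangements => /and3P[_ /eqP -> _] /and3P[_ /eqP -> _].
- by move=> s; rewrite mem_filter andbC mem_prefix_split.
Qed.

End PrefixSplit.

Local Open Scope ring_scope.

Lemma sum_indicator_unique (T : finType) (R : pzSemiRingType) (P b : pred T) :
  {in P &, forall x y, b x -> b y -> x = y} ->
  \sum_(x | P x) ((b x)%:R : R) = [exists x, P x && b x]%:R.
Proof.
move=> uniq_b; case: existsP => [[x0 /andP[Px0 bx0]]|none].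
  rewrite (bigD1 x0) //= bx0 big1 ?addr0 // => x /andP[Px nx].
  by case: (boolP (b x)) => // bx; rewrite (uniq_b x x0 Px Px0 bx bx0) eqxx in nx.
by rewrite big1 // => x Px; case: (boolP (b x)) => // bx; case: none; exists x; rewrite Px.
Qed.

Lemma sum_supsets (T : finType) (R : pzSemiRingType) (L A : {set T}) :
  \sum_(A' : {set T} | A \subset A') ((L == A')%:R : R) = (A \subset L)%:R.
Proof.
rewrite big_mkcond (bigD1 L) //= eqxx big1 ?addr0; first by case: ifP.
by move=> A' nA'; rewrite eq_sym (negbTE nA'); case: ifP.
Qed.

Lemma sum_ffun_marginal (I J : finType) (R : comPzSemiRingType) (nu : I -> J -> R) (g : J -> R) i0 :
  (forall i, i != i0 -> \sum_j nu i j = 1) ->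
  \sum_(f : {ffun I -> J}) (\prod_i nu i (f i)) * g (f i0) = \sum_j nu i0 j * g j.
Proof.
move=> nu1; pose G i j := if i == i0 then nu i j * g j else nu i j.
transitivity (\sum_(f : {ffun I -> J}) \prod_i G i (f i)).
  apply: eq_bigr => f _; rewrite (bigD1 i0) //= [RHS](bigD1 i0) //= /G eqxx mulrAC.
  by congr (_ * _); apply: eq_bigr => i /negbTE ->.
rewrite -bigA_distr_bigA (bigD1 i0) //= [X in _ * X]big1 => [|i ni0]; last first.
  by rewrite /G (negbTE ni0) nu1.
by rewrite mulr1; apply: eq_bigr => j _; rewrite /G eqxx.
Qed.

Section DownsetCounting.
Variables (X : finType) (o : LO X).

Lemma sum_isMax (R : pzSemiRingType) A : A != set0 -> \sum_(x in A) ((isMax o A x)%:R : R) = 1.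
Proof.
move=> A0; rewrite sum_indicator_unique; last first.
  move=> x y _ _; rewrite !isMaxE => /andP[xA Ax] /andP[yA Ay].
  by apply: downset_antisym; [apply: (subsetP Ay) | apply: (subsetP Ax)].
case: existsP => // -[]; case: (exists_max o A0) => m mA Am.
by exists m; rewrite mA isMaxE mA Am.
Qed.

Lemma sum_downset_setT (R : pzSemiRingType) : (0 < #|X|)%N ->
  \sum_y ((downset o y == setT)%:R : R) = 1.
Proof.
move=> X0; rewrite sum_indicator_unique => [|x y _ _ /eqP dx /eqP dy]; last first.
  by apply: (@downset_inj _ o); rewrite dx dy.
case: existsP => // -[]; have T0 : [set: X] != set0 by rewrite -card_gt0 cardsT.
by case: (exists_max o T0) => m _ Tm; exists m; rewrite eqEsubset subsetT.
Qed.

Lemma sum_downset_succ (R : pzSemiRingType) (B : {set X}) :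
  B != set0 -> B != setT ->
  \sum_(y in B) ((downset o y == B)%:R : R) = \sum_(z in ~: B) (downset o z == z |: B)%:R.
Proof.
move=> B0 BT; rewrite [RHS](eq_bigl (fun z => z \notin B)) => [|z]; last by rewrite inE.
rewrite !sum_indicator_unique => [|z z' zB z'B /eqP dz /eqP dz'|y y' _ _ /eqP dy /eqP dy'].
- rewrite -downset_succ //; congr (nat_of_bool _)%:R; apply/existsP/existsP => -[y].
    by case/andP=> _ dy; exists y.
  by move=> /eqP dy; exists y; rewrite -dy downset_refl eqxx.
- case/orP: (downset_total o z z'); rewrite ?dz ?dz' in_setU1.
    by case/orP=> [/eqP //|]; rewrite (negbTE zB).
  by case/orP=> [/eqP //|]; rewrite (negbTE z'B).
- by apply: (@downset_inj _ o); rewrite dy dy'.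
Qed.

End DownsetCounting.

Section FlowDecomposition.
Variables (X : finType) (R : numFieldType) (phi : X -> {set X} -> R).
Implicit Types (B D E : {set X}) (s t : seq X).
Hypothesis phi_ge0 : forall y (B : {set X}), y \in B -> 0 <= phi y B.
Hypothesis phi_conservation : forall B : {set X}, B != set0 -> B != setT ->
  \sum_(y in B) phi y B = \sum_(z in ~: B) phi z (z |: B).

Definition mass (B : {set X}) : R := \sum_(y in B) phi y B.

Definition step (y : X) (B : {set X}) : R := phi y B / mass B.

(* Probability that the chain descends from [D :|: [set:: s]] to [D] by removing the
   elements of [s] from the last to the first. *)
Fixpoint chain_weight (D : {set X}) (s : seq X) : R :=
  if s is x :: s' then step x (x |: D) * chain_weight (x |: D) s' else 1.

Definition flow_weight (o : LO X) : R := \prod_z step z (downset o z).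

Lemma mass_ge0 B : 0 <= mass B.
Proof. by apply: sumr_ge0 => y; apply: phi_ge0. Qed.

Lemma step_ge0 y B : y \in B -> 0 <= step y B.
Proof. by move=> yB; rewrite divr_ge0 ?phi_ge0 ?mass_ge0. Qed.

Lemma step_mass y B : y \in B -> step y B * mass B = phi y B.
Proof.
move=> yB; have [m0|mn0] := eqVneq (mass B) 0; last by rewrite divfK.
by rewrite m0 mulr0; apply/esym; move/psumr_eq0P: m0; apply => // w; apply: phi_ge0.
Qed.

Lemma sum_step B : mass B != 0 -> \sum_(y in B) step y B = 1.
Proof. by move=> mn0; rewrite -mulr_suml divff. Qed.

Lemma mass_setD1_gt0 E x : x \in E -> phi x E != 0 -> E :\ x = set0 \/ 0 < mass (E :\ x).
Proof.
move=> xE phin0; have [->|Ex0] := eqVneq (E :\ x) set0; [by left | right].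
have ExT : E :\ x != setT by apply/eqP => ExT; move: (in_setT x); rewrite -ExT setD11.
rewrite /mass phi_conservation // (bigD1 x) /=; last by rewrite !inE eqxx.
rewrite setD1K //; apply: (@lt_le_trans _ _ (phi x E)); first by rewrite lt0r phin0 phi_ge0.
by rewrite lerDl; apply: sumr_ge0 => z _; rewrite phi_ge0 // setU11.
Qed.

Lemma chain_weight_cat D s t :
  chain_weight D (s ++ t) = chain_weight D s * chain_weight (D :|: [set:: s]) t.
Proof.
elim: s D => [|x s IH] D /=; first by rewrite mul1r set_nil setU0.
by rewrite IH mulrA set_cons setUCA setUA.
Qed.

Lemma prod_step_prefix D s : uniq s ->
  \prod_(z <- s) step z (D :|: prefix_set s z) = chain_weight D s.
Proof.
elim: s D => [|x s IH] D; rewrite ?big_nil //= => /andP[xs us].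
rewrite big_cons -(IH (x |: D) us) prefix_set_cons eqxx setUC; congr (_ * _).
apply: eq_big_seq => z zs; rewrite prefix_set_cons.
by case: eqVneq (memPn xs z zs) => [->|_]; rewrite ?eqxx // setUCA setUA.
Qed.

Lemma flow_weight_lo_of_seq s :
  s \in orderings X -> flow_weight (lo_of_seq s) = chain_weight set0 s.
Proof.
move=> hs; have /andP[us /forallP sT] : uniq s && [forall x, x \in s] by rewrite -mem_orderings.
rewrite -(prod_step_prefix set0 us) /flow_weight.
rewrite (perm_big s) /=; last first.
  by apply: uniq_perm; rewrite ?index_enum_uniq // => z; rewrite mem_index_enum sT.
by apply: eq_bigr => z _; rewrite set0U downset_lo_of_seq.
Qed.

Lemma sum_chain_weight E : E = set0 \/ 0 < mass E ->
  \sum_(v <- arrangements #|E| E) chain_weight set0 v = 1.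
Proof.
move cE: #|E| => n; elim: n E cE => [|n IH] E cE E0; first by rewrite big_seq1.
have mE : mass E != 0.
  case: E0 => [E0|]; [by move: cE; rewrite E0 cards0 | by rewrite lt0r => /andP[]].
rewrite big_arrangements_rcons -[RHS](sum_step mE); apply: eq_bigr => x xE.
have cEx : #|E :\ x| = n by move: cE; rewrite (cardsD1 x) xE add1n => -[].
rewrite -cEx (eq_big_seq (fun v => chain_weight set0 v * step x E)); last first.
  move=> v; rewrite arrangements_card => /andP[_ /eqP vE].
  by rewrite -cats1 chain_weight_cat /= set0U vE setD1K // mulr1.
rewrite -mulr_suml; have [phi0|phin0] := eqVneq (phi x E) 0.
  by rewrite /step phi0 !mul0r mulr0.
by rewrite cEx IH ?mul1r //; apply: mass_setD1_gt0.
Qed.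

Lemma sum_chain_weight_reach D : D != set0 ->
  mass setT * \sum_(s <- arrangements #|~: D| (~: D)) chain_weight D s = mass D.
Proof.
move cD: #|~: D| => n; elim: n D cD => [|n IH] D cD D0.
  have -> : D = setT by rewrite -(setCK D); move/cards0_eq: cD => ->; rewrite setC0.
  by rewrite big_seq1 mulr1.
have DT : D != setT by apply/eqP => DT; move: cD; rewrite DT setCT cards0.
rewrite big_arrangementsS mulr_sumr [RHS]/mass phi_conservation //; apply: eq_bigr => x xD.
have CxD : ~: D :\ x = ~: (x |: D) by apply/setP => w; rewrite !inE negb_or.
have cxD : #|~: (x |: D)| = n by move: cD; rewrite (cardsD1 x) xD CxD add1n => -[].
rewrite CxD /= -big_distrr /= mulrCA IH ?step_mass ?setU11 //.
by apply/set0Pn; exists x; rewrite setU11.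
Qed.

Lemma flow_weight_downset y B : y \in B ->
  mass setT * \sum_(o : LO X) flow_weight o * (downset o y == B)%:R = phi y B.
Proof.
move=> yB; have B0 : B != set0 by apply/set0Pn; exists y.
pose hit s := if prefix_set s y == B then chain_weight set0 s else 0.
rewrite big_LO (eq_big_seq hit) => [|s hs]; last first.
  rewrite flow_weight_lo_of_seq // downset_lo_of_seq // /hit.
  by case: eqP; rewrite ?mulr1 ?mulr0.
rewrite -big_mkcond /orderings -cardsT big_prefix_split ?subsetT // setTD.
rewrite (eq_big_seq (fun v => chain_weight set0 v * step y B *
                             \sum_(u <- arrangements #|~: B| (~: B)) chain_weight B u)); last first.
  move=> v; rewrite arrangements_card => /andP[_ /eqP vB]; rewrite mulr_sumr; apply: eq_bigr => u _.
  by rewrite chain_weight_cat /= set0U vB setD1K // mulrA.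
rewrite -!mulr_suml mulrCA sum_chain_weight_reach // -mulrA step_mass //.
have [->|phin0] := eqVneq (phi y B) 0; first by rewrite mulr0.
by rewrite sum_chain_weight ?mul1r //; apply: mass_setD1_gt0.
Qed.

Lemma flow_weight_ge0 o : 0 <= flow_weight o.
Proof. by apply: prodr_ge0 => z _; apply/step_ge0/downset_refl. Qed.

(* A null flow is decomposed by any distribution; we take a point mass. *)
Definition flow_distr (o : LO X) : R :=
  if mass setT == 0 then (o == lo_of_seq [::])%:R else flow_weight o.

Lemma flow_distr_ge0 o : 0 <= flow_distr o.
Proof. by rewrite /flow_distr; case: eqP => _; rewrite ?ler0n ?flow_weight_ge0. Qed.

Lemma sum_flow_distr : \sum_o flow_distr o = 1.
Proof.
rewrite /flow_distr; case: eqVneq => [_|mT].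
  by rewrite (bigD1 (lo_of_seq [::])) //= eqxx big1 ?addr0 // => o /negbTE ->.
rewrite big_LO (eq_big_seq (chain_weight set0)) => [|s hs]; last exact: flow_weight_lo_of_seq.
by rewrite /orderings -cardsT sum_chain_weight //; right; rewrite lt0r mT mass_ge0.
Qed.

Lemma flow_distr_downset y B : y \in B ->
  mass setT * \sum_o flow_distr o * (downset o y == B)%:R = phi y B.
Proof.
move=> yB; rewrite -(flow_weight_downset yB) /flow_distr.
by case: eqP => [->|//]; rewrite !mul0r.
Qed.

Lemma flow_distr_supset x (A : {set X}) (H : {set X} -> R) : x \in A ->
  mass setT * \sum_o flow_distr o * ((A \subset downset o x)%:R * H (downset o x)) =
  \sum_(D : {set X} | A \subset D) phi x D * H D.
Proof.
move=> xA; transitivity (mass setT *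
    \sum_(D : {set X} | A \subset D) \sum_o H D * (flow_distr o * (downset o x == D)%:R)).
  congr (_ * _); rewrite exchange_big; apply: eq_bigr => o _.
  rewrite -(sum_supsets R (downset o x) A) mulr_suml mulr_sumr; apply: eq_bigr => D _.
  by case: eqP => [->|_]; rewrite ?(mulr0, mul0r) // mul1r mulr1 mulrC.
rewrite mulr_sumr; apply: eq_bigr => D AD.
by rewrite -mulr_sumr mulrCA flow_distr_downset ?(subsetP AD) // mulrC.
Qed.

End FlowDecomposition.

Section JointChoice.
Variables (X : finType) (R : realType).
Variables (Xlim : {set {set X} * {set X}}) (p : X -> X -> {set X} -> {set X} -> R).
Implicit Types (A B : {set X}) (w : Row X) (o : LO X).

Lemma Eentry_downset w x y A B : x \in A -> y \in B ->
  Eentry R w x y A B = (A \subset downset w.1 x)%:R * (B \subset downset (w.2 x) y)%:R.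
Proof.
move=> xA yB; rewrite /Eentry !isMaxE xA yB /=.
by case: (A \subset _); case: (B \subset _); rewrite ?mulr1 ?mulr0.
Qed.

Lemma sum_Eentry w A B : A != set0 -> B != set0 ->
  \sum_(x in A) \sum_(y in B) Eentry R w x y A B = 1.
Proof.
move=> A0 B0; rewrite -[RHS](sum_isMax w.1 R A0); apply: eq_bigr => x _.
rewrite /Eentry; case: (isMax _ _ _) => /=; last by rewrite big1.
by rewrite -[RHS](sum_isMax (w.2 x) R B0); apply: eq_bigr => y _; case: (isMax _ _ _).
Qed.

Lemma big_Row (F : Row X -> R) : \sum_w F w = \sum_o \sum_(f : {ffun X -> LO X}) F (o, f).
Proof. by rewrite pair_big; apply: eq_bigr => -[]. Qed.

Lemma sum_product_Eentry (mu : LO X -> R) (t : X -> LO X -> LO X -> R) x y A B :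
  x \in A -> y \in B -> (forall z o, \sum_o' t z o o' = 1) ->
  \sum_(w : Row X) mu w.1 * (\prod_z t z w.1 (w.2 z)) * Eentry R w x y A B =
  \sum_o mu o * (A \subset downset o x)%:R * \sum_o' t x o o' * (B \subset downset o' y)%:R.
Proof.
move=> xA yB t_sum1; rewrite big_Row; apply: eq_bigr => o _.
rewrite (eq_bigr (fun f : {ffun X -> LO X} => mu o * (A \subset downset o x)%:R *
  ((\prod_z t z o (f z)) * (B \subset downset (f x) y)%:R))); last first.
  by move=> f _; rewrite Eentry_downset //= mulrACA.
by rewrite -mulr_sumr (@sum_ffun_marginal _ _ _ (t^~ o) (fun o' => (B \subset downset o' y)%:R)).
Qed.

Lemma CDRU_rE : CDRU_rep Xlim p -> rE_rep Xlim p.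
Proof.
case=> nu [t [nu_ge0 _ t_ge0 t_sum1 rep]].
exists (fun w => nu w.1 * \prod_z t z w.1 (w.2 z)); split.
  by move=> w; rewrite mulr_ge0 ?prodr_ge0.
move=> A B x y AB xA yB; rewrite rep // sum_product_Eentry // [RHS]big_mkcond.
apply: eq_bigr => o _; rewrite inNE; case: (A \subset _); rewrite ?mulr0 ?mul0r // mulr1.
rewrite mulr_sumr [RHS]big_mkcond; apply: eq_bigr => o' _.
by rewrite inNE; case: (B \subset _); rewrite ?mulr1 ?mulr0.
Qed.

Lemma rE_normalize : observed_RJCR Xlim p -> rE_rep Xlim p ->
  exists r : Row X -> R, [/\ forall w, 0 <= r w, \sum_w r w = 1 &
    forall A B x y, (A, B) \in Xlim -> x \in A -> y \in B ->
      \sum_w r w * Eentry R w x y A B = p x y A B].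
Proof.
case=> Xlim_ne0 [_ p_sum1] [r [r_ge0 rep]].
have [Xlim0|] := eqVneq Xlim set0.
  pose w0 : Row X := (lo_of_seq [::], [ffun=> lo_of_seq [::]]).
  exists (fun w => (w == w0)%:R); split=> [w||A B x y]; rewrite ?ler0n ?Xlim0 ?inE //.
  by rewrite (bigD1 w0) //= eqxx big1 ?addr0 // => w /negbTE ->.
case/set0Pn=> -[A B] AB; have [A0 B0] := Xlim_ne0 A B AB.
exists r; split=> //; rewrite -(p_sum1 A B AB).
under [RHS]eq_bigr => x xA do under eq_bigr => y yB do rewrite -rep //.
under [RHS]eq_bigr do rewrite exchange_big; rewrite exchange_big; apply: eq_bigr => w _.
rewrite -[LHS]mulr1 -(sum_Eentry w A0 B0) mulr_sumr.
by apply: eq_bigr => x _; rewrite mulr_sumr.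
Qed.

Lemma rE_CDRU : observed_RJCR Xlim p -> rE_rep Xlim p -> CDRU_rep Xlim p.
Proof.
move=> obs /(rE_normalize obs) [r [r_ge0 r_sum1 rep]].
pose nu o := \sum_(f : {ffun X -> LO X}) r (o, f).
pose joint x o o' := \sum_(f : {ffun X -> LO X} | f x == o') r (o, f).
pose t x o o' := if nu o == 0 then (o' == lo_of_seq [::])%:R else joint x o o' / nu o.
have joint_ge0 x o o' : 0 <= joint x o o' by apply: sumr_ge0 => f _.
have sum_joint x o : \sum_o' joint x o o' = nu o.
  by rewrite /nu (partition_big (fun f : {ffun X -> LO X} => f x) xpredT).
have nu_t x o o' : nu o * t x o o' = joint x o o'.
  rewrite /t; case: eqVneq => [nu0|nun0]; last by rewrite mulrC divfK.
  by rewrite nu0 mul0r /joint big1 // => f _; apply: (psumr_eq0P (fun g _ => r_ge0 (o, g)) nu0).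
exists nu, t; split.
- by move=> o; apply: sumr_ge0.
- by rewrite -r_sum1 big_Row.
- by move=> x o o'; rewrite /t; case: eqP => _; rewrite ?ler0n ?divr_ge0 ?sumr_ge0.
- move=> x o; rewrite /t; case: eqVneq => [_|nun0]; last by rewrite -mulr_suml sum_joint divff.
  by rewrite (bigD1 (lo_of_seq [::])) //= eqxx big1 ?addr0 // => o' /negbTE ->.
move=> A B x y AB xA yB; rewrite -rep // big_Row [RHS]big_mkcond; apply: eq_bigr => o _ /=.
rewrite (eq_bigr (fun f : {ffun X -> LO X} =>
  (A \subset downset o x)%:R * (r (o, f) * (B \subset downset (f x) y)%:R))); last first.
  by move=> f _; rewrite Eentry_downset //= mulrCA.
rewrite -mulr_sumr inNE; case: (A \subset _); last by rewrite mul0r.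
rewrite mul1r [RHS]big_mkcond (partition_big (fun f : {ffun X -> LO X} => f x) xpredT) //=.
apply: eq_bigr => o' _; rewrite inNE nu_t /joint.
rewrite (eq_bigr (fun f => r (o, f) * (B \subset downset o' y)%:R)) => [|f /eqP -> //].
by rewrite -mulr_suml; case: (B \subset _); rewrite ?mulr1 ?mulr0.
Qed.

Lemma rE_q : (0 < #|X|)%N -> observed_RJCR Xlim p -> rE_rep Xlim p -> q_rep Xlim p.
Proof.
move=> X0 obs /(rE_normalize obs) [r [r_ge0 r_sum1 rep]].
pose q x y A B := \sum_w r w * ((downset w.1 x == A)%:R * (downset (w.2 x) y == B)%:R).
have q_setT (P : pred X) (G : X -> {set X}) :
    \sum_(x | P x) \sum_y q x y (G x) setT = \sum_w r w * \sum_(x | P x) (downset w.1 x == G x)%:R.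
  rewrite /q; under eq_bigr do rewrite exchange_big; rewrite exchange_big /=.
  apply: eq_bigr => w _; rewrite mulr_sumr; apply: eq_bigr => x _.
  by rewrite -mulr_sumr -mulr_sumr (sum_downset_setT _ _ X0) mulr1.
exists q; split.
- move=> A B x y AB xA yB; rewrite -rep // /q.
  under eq_bigr do rewrite exchange_big; rewrite exchange_big; apply: eq_bigr => w _.
  rewrite Eentry_downset // -(sum_supsets R (downset w.1 x) A).
  rewrite -(sum_supsets R (downset (w.2 x) y) B).
  rewrite mulr_suml mulr_sumr; apply: eq_bigr => A' _.
  by rewrite mulr_sumr mulr_sumr.
- move=> A B x _ B0 BT _; rewrite /q [LHS]exchange_big [RHS]exchange_big; apply: eq_bigr => w _ /=.
  by rewrite -!mulr_sumr sum_downset_succ.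
- by move=> A B x y _ _ _ _; apply: sumr_ge0 => w _; rewrite mulr_ge0 ?mulr_ge0.
- move=> A A0 AT; rewrite (q_setT (mem A) (fun=> A)) (q_setT (mem (~: A)) (fun z => z |: A)).
  by apply: eq_bigr => w _; rewrite sum_downset_succ.
- rewrite (q_setT xpredT (fun=> setT)) -[RHS]r_sum1.
  by apply: eq_bigr => w _; rewrite sum_downset_setT ?mulr1.
Qed.

Lemma q_rE : q_rep Xlim p -> rE_rep Xlim p.
Proof.
case=> q [q_p q_flow q_ge0 q_flow1 q_sum1].
pose phi1 x A := \sum_y q x y A setT.
have phi1_ge0 x A : x \in A -> 0 <= phi1 x A.
  move=> xA; apply: sumr_ge0 => y _.
  by apply: q_ge0; rewrite ?inE //; apply/set0Pn; [exists x | exists y].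
have mass1 : mass phi1 setT = 1.
  by rewrite -q_sum1; apply: eq_bigl => x; rewrite inE.
pose phi2 x A y B := q x y A B.
have phi2_ge0 x A : x \in A -> forall y B, y \in B -> 0 <= phi2 x A y B.
  by move=> xA y B yB; apply: q_ge0 => //; apply/set0Pn; [exists x | exists y].
have phi2_flow x A : x \in A -> forall B, B != set0 -> B != setT ->
    \sum_(y in B) phi2 x A y B = \sum_(z in ~: B) phi2 x A z (z |: B).
  by move=> xA B B0 BT; apply: q_flow => //; apply/set0Pn; exists x.
have mass2 x A : mass (phi2 x A) setT = phi1 x A.
  by apply: eq_bigl => y; rewrite inE.
pose nu2 x A := flow_distr (phi2 x A).
exists (fun w => flow_distr phi1 w.1 * \prod_z nu2 z (downset w.1 z) (w.2 z)); split.
  move=> w; rewrite mulr_ge0 ?flow_distr_ge0 ?prodr_ge0 // => z _.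
  exact: flow_distr_ge0 (phi2_ge0 z _ (downset_refl _ z)) _.
move=> A B x y AB xA yB.
pose G L := \sum_o' nu2 x L o' * (B \subset downset o' y)%:R.
have nu2_sum1 z o : \sum_o' nu2 z (downset o z) o' = 1.
  by apply: sum_flow_distr (phi2_ge0 z _ (downset_refl o z)) (phi2_flow z _ (downset_refl o z)).
rewrite -q_p //.
rewrite (@sum_product_Eentry (flow_distr phi1) (fun z o => nu2 z (downset o z)) x y A B xA yB) //.
transitivity (mass phi1 setT *
  \sum_o flow_distr phi1 o * ((A \subset downset o x)%:R * G (downset o x))).
  by rewrite mass1 mul1r; apply: eq_bigr => o _; rewrite mulrA.
rewrite (flow_distr_supset phi1_ge0 q_flow1 G xA); apply: eq_bigr => A' AA'.
have xA' : x \in A' := subsetP AA' x xA.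
transitivity (\sum_(B' : {set X} | B \subset B') phi2 x A' y B' * 1); last first.
  by apply: eq_bigr => B' _; rewrite mulr1.
rewrite -(flow_distr_supset (phi2_ge0 x A' xA') (phi2_flow x A' xA') (fun=> 1) yB) mass2.
by congr (_ * _); apply: eq_bigr => o' _; rewrite mulr1.
Qed.

End JointChoice.

Theorem theorem7 (X : finType) (R : realType)
    (Xlim : {set {set X} * {set X}})
    (p : X -> X -> {set X} -> {set X} -> R) :
  (0 < #|X|)%N ->
  observed_RJCR Xlim p ->
  (CDRU_rep Xlim p <-> rE_rep Xlim p) /\ (rE_rep Xlim p <-> q_rep Xlim p).
Proof.
move=> X0 obs; split; split.
- exact: CDRU_rE.
- exact: rE_CDRU.
- exact: rE_q.
- exact: q_rE.
Qed.
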